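(* Let $A\in\mathbb{R}^{n\times n}$ and $B\in\mathbb{R}^{n\times m}$ with $\rho(|A|)<1$, and let $T$ be a positive integer. Let $i,j\in\{1,\dots,n\}$, $i\neq j$, and $w\in\mathbb{R}$ be such that $\rho(|A|+|w|e_je_i^{\top})<1$. Then $$\operatorname{tr}(\mathcal{W}_A)\le\operatorname{tr}(\mathcal{W}^{\infty}_A)\le\operatorname{tr}(\mathcal{H}_{\mathcal{X}})$$ and $$\operatorname{tr}(\mathcal{W}_{A+we_je_i^{\top}})\le(1+\alpha\beta)\operatorname{tr}(\mathcal{H}_{\mathcal{X}})+\alpha^2\gamma\bar{\gamma}.$$
   Context: $|\cdot|$ is taken entrywise; $\rho$ is the spectral radius; $e_k$ is the $k$-th canonical unit vector; $\|\cdot\|$ is the Euclidean norm. For $Z\in\mathbb{R}^{n\times n}$, $\mathcal{W}_Z=\sum_{t=0}^{T-1}Z^tBB^{\top}(Z^t)^{\top}$ and $\mathcal{W}^\infty_Z=\sum_{t=0}^{\infty}Z^tBB^{\top}(Z^t)^{\top}$. Define $\mathcal{X}=(I-|A|)^{-1}$, $\mathcal{H}_{\mathcal{X}}=\mathcal{X}|B||B|^{\top}\mathcal{X}^{\top}$, $\alpha_{pq}=\frac{|w|}{1-|w|e_p^{\top}\mathcal{X}e_q}$, $\alpha=\max_{p\neq q}\alpha_{pq}$, $\beta=\max\{\max_{p\neq q}2e_p^{\top}\mathcal{X}e_q,\ \max_{p\neq q}e_p^{\top}\mathcal{X}e_q+\max_{q}\|\mathcal{X}e_q\|\}$, $\gamma=\max_k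 e_k^{\top}\mathcal{X}^{\top}\mathcal{X}e_k$, $\bar\gamma=\max_k e_k^{\top}\mathcal{X}|B||B|^{\top}\mathcal{X}^{\top}e_k$. *)

From HB Require Import structures.
From mathcomp Require Import all_boot all_order all_algebra.
From mathcomp Require Import complex.
From mathcomp Require Import all_classical all_reals all_analysis.
Set Implicit Arguments. Unset Strict Implicit. Unset Printing Implicit Defensive.
Import Order.TTheory GRing.Theory Num.Theory.
Local Open Scope ring_scope.

Section Defs.
Variable R : realType.

Definition absmx (p q : nat) (M : 'M[R]_(p, q)) : 'M[R]_(p, q) :=
  map_mx (fun x => `|x|) M.

Definition eigvals (n : nat) (M : 'M[R]_n) : seq R[i] :=
  projT1 (closed_field_poly_normal (char_poly (map_mx (real_complex R) M))).

(* spectral radius: largest modulus of an eigenvalue (0 for the empty matrix) *)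
Definition specrad (n : nat) (M : 'M[R]_n) : R :=
  \big[Num.max/0]_(z <- eigvals M) @complex.Re R `|z|.

Definition gram (n m T : nat) (Z : 'M[R]_n) (B : 'M[R]_(n, m)) : 'M[R]_n :=
  \sum_(t < T) (Z ^+ t *m B *m B^T *m (Z ^+ t)^T).

Definition gram_inf (n m : nat) (Z : 'M[R]_n) (B : 'M[R]_(n, m)) : 'M[R]_n :=
  \matrix_(p, q)
    limn (fun N => \sum_(0 <= t < N) (Z ^+ t *m B *m B^T *m (Z ^+ t)^T) p q).

(* max of F p q over p <> q, seeded with the member F i j (i <> j) *)
Definition max_offdiag (n : nat) (i j : 'I_n) (F : 'I_n -> 'I_n -> R) : R :=
  \big[Num.max/F i j]_(p < n) \big[Num.max/F i j]_(q < n | p != q) F p q.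

(* max of F k over all k, seeded with the member F i *)
Definition max_all (n : nat) (i : 'I_n) (F : 'I_n -> R) : R :=
  \big[Num.max/F i]_(k < n) F k.

End Defs.

(* If N >= 0 entrywise and rho(N) < 1, then (1 - N)^-1 >= 0: along s in [0, 1] the
   inverses (1 - sN)^-1 exist and are uniformly bounded, since the eigenvalues keep
   |det (1 - sN)| >= (1 - rho(N))^n, and a discrete minimum principle shows that a small
   increase of s preserves nonnegativity.
   As |A^t| <= |A|^t entrywise, each diagonal entry of the Gramian, a sum over t of
   squares, is at most the square of a row of (sum_t |A|^t)|B| <= X|B|; this gives
   tr W_A <= tr H_X, and monotone convergence handles W^oo_A.
   For A + w e_j e_i^T the same argument runs with |A| + |w| e_j e_i^T, whose resolvent
   is X + alpha_ij X e_j e_i^T X by Sherman-Morrison, nonnegativity forcing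
   1 - |w| X_ij > 0.  Expanding the Frobenius norm of this rank-one update of X|B| and
   bounding the cross term by a weighted Cauchy-Schwarz inequality yields the constants
   alpha, beta, gamma and gammabar. *)

From HB Require Import structures.
From mathcomp Require Import all_boot all_order all_algebra.
From mathcomp Require Import complex perm.
From mathcomp Require Import all_classical all_reals all_analysis.
From mathcomp Require Import ring lra.
Set Implicit Arguments. Unset Strict Implicit. Unset Printing Implicit Defensive.
Import Order.TTheory GRing.Theory Num.Theory numFieldNormedType.Exports.
Local Open Scope complex_scope.
Local Open Scope ring_scope.

Lemma char_poly_horner (F : comNzRingType) n (M : 'M[F]_n) x :
  (char_poly M).[x] = \det (x%:M - M).
Proof.
rewrite /char_poly -horner_evalE -det_map_mx; congr (\det _).
apply/matrixP => a b; rewrite !mxE /= horner_evalE hornerD hornerN hornerC.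
by rewrite hornerMn hornerX.
Qed.

Lemma normc_real (R : rcfType) (x : R) : `|x%:C| = `|x|%:C.
Proof. by rewrite normc_def /= expr0n /= addr0 sqrtr_sqr. Qed.

Lemma normc_ReE (R : rcfType) (z : R[i]) : `|z| = (complex.Re `|z|)%:C.
Proof. by rewrite {1}normc_def normc_def. Qed.

Lemma normc_1_subZ_ge (R : rcfType) (z : R[i]) (s r : R) :
  complex.Re `|z| <= r -> 0 <= s <= 1 -> (1 - r)%:C <= `|1 - s%:C * z|.
Proof.
move=> zr /andP[s0 s1]; apply: le_trans (lerB_dist _ _).
have z0 : 0 <= complex.Re `|z| by rewrite normc_def /= sqrtr_ge0.
rewrite normr1 normrM normc_ReE normc_real (ger0_norm s0) -rmorphM -rmorphB lecR.
by rewrite lerD2l lerN2 (le_trans _ zr) // ler_piMl.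
Qed.

Section SpectralRadius.
Variables (R : realType) (n : nat) (N : 'M[R]_n).

Lemma specrad_ge0 : 0 <= specrad N.
Proof.
rewrite /specrad; elim: (eigvals N) => [|z r IH]; first by rewrite big_nil.
by rewrite big_cons le_max IH orbT.
Qed.

Lemma Re_normc_le_specrad (z : R[i]) :
  z \in eigvals N -> complex.Re `|z| <= specrad N.
Proof.
rewrite /specrad; elim: (eigvals N) => [|y r IH] //.
by rewrite in_cons big_cons le_max => /orP[/eqP->|/IH ->]; rewrite ?lexx ?orbT.
Qed.

Lemma char_poly_eigvals :
  char_poly (map_mx (real_complex R) N) = \prod_(z <- eigvals N) ('X - z%:P).
Proof.
rewrite /eigvals; case: closed_field_poly_normal => r /= ->.
by rewrite (monicP (char_poly_monic _)) scale1r.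
Qed.

Lemma size_eigvals : size (eigvals N) = n.
Proof.
have := size_char_poly (map_mx (real_complex R) N).
by rewrite char_poly_eigvals size_prod_XsubC => -[].
Qed.

Lemma det_1_subZ (s : R) :
  (\det (1%:M - s *: N))%:C = \prod_(z <- eigvals N) (1 - s%:C * z).
Proof.
have [->|s0] := eqVneq s 0.
  by rewrite scale0r subr0 det1 big1 // => z _; rewrite mul0r subr0.
have sC0 : s%:C != 0 by rewrite (inj_eq (@complexI R)).
have -> : (\det (1%:M - s *: N))%:C =
    s%:C ^+ n * \det ((s%:C)^-1%:M - map_mx (real_complex R) N).
  rewrite -det_map_mx -detZ; congr (\det _); apply/matrixP => a b.
  by rewrite !mxE /= mulrBr mulrnAr mulfV // rmorphB rmorphM /= rmorphMn.
rewrite -char_poly_horner char_poly_eigvals horner_prod -[in _ ^+ n]size_eigvals.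
elim: (eigvals N) => [|z r IH]; first by rewrite !big_nil mulr1.
rewrite !big_cons exprS -mulrA (mulrCA (_ ^+ _)) IH mulrA hornerXsubC mulrBr mulfV //.
Qed.

Lemma det_1_subZ_ge (s : R) : specrad N < 1 -> 0 <= s <= 1 ->
  (1 - specrad N) ^+ n <= `|\det (1%:M - s *: N)|.
Proof.
move=> rho_lt1 s01; rewrite -lecR -normc_real det_1_subZ normr_prod rmorphXn /=.
have le_prod r : {in r, forall z, complex.Re `|z| <= specrad N} ->
    (1 - specrad N)%:C ^+ size r <= \prod_(z <- r) `|1 - s%:C * z|.
  elim: r => [|z r IH] le_rho; first by rewrite big_nil expr0.
  rewrite big_cons exprS; apply: ler_pM.
  - by rewrite lecR subr_ge0 ltW.
  - by rewrite exprn_ge0 // lecR subr_ge0 ltW.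
  - by apply: normc_1_subZ_ge => //; apply: le_rho; rewrite mem_head.
  - by apply: IH => y yr; apply: le_rho; rewrite in_cons yr orbT.
by have := le_prod _ (@Re_normc_le_specrad); rewrite size_eigvals.
Qed.

End SpectralRadius.

Lemma norm_cofactor_le (R : numDomainType) n (M : 'M[R]_n) (b : R) :
  1 <= b -> (forall a c, `|M a c| <= b) ->
  forall a c, `|cofactor M a c| <= n`!%:R * b ^+ n.
Proof.
move=> b_ge1 Mb a c; rewrite expand_cofactor.
apply: le_trans (ler_norm_sum _ _ _) _.
rewrite -card_Sn mulr_natl -sumr_const big_mkcond /=.
apply: ler_sum => s _; case: ifP => _; last by rewrite exprn_ge0 // (le_trans ler01).
rewrite normrM normrX normrN1 expr1n mul1r normr_prod.
apply: le_trans (_ : \prod_(k | a != k) b <= _).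
  by apply: ler_prod => k _; rewrite normr_ge0 Mb.
rewrite prodr_const; apply: ler_weXn2l => //.
by apply: leq_trans (max_card _) _; rewrite card_ord.
Qed.

Section ResolventBound.
Variables (R : realType) (n : nat) (N : 'M[R]_n).
Hypothesis rho_lt1 : specrad N < 1.

Let entry_sum : R := \sum_a \sum_c `|N a c|.

Let entry_sum_ge0 : 0 <= entry_sum.
Proof. by rewrite sumr_ge0 // => a _; rewrite sumr_ge0. Qed.

(* Cramer's rule: the cofactors of 1 - sN are at most n! (1 + entry_sum)^n and
   |det (1 - sN)| >= (1 - rho(N))^n, uniformly in s in [0, 1]. *)
Definition resolvent_bound : R :=
  n`!%:R * (1 + entry_sum) ^+ n / (1 - specrad N) ^+ n.

Lemma resolvent_bound_ge0 : 0 <= resolvent_bound.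
Proof.
rewrite divr_ge0 ?mulr_ge0 ?exprn_ge0 ?subr_ge0 ?(ltW rho_lt1) //.
by rewrite addr_ge0 ?entry_sum_ge0.
Qed.

Variable s : R.
Hypothesis s01 : 0 <= s <= 1.

Lemma unitmx_1_subZ : (1%:M - s *: N) \in unitmx.
Proof.
rewrite unitmxE unitfE -normr_gt0; apply: lt_le_trans (det_1_subZ_ge rho_lt1 s01).
by rewrite exprn_gt0 // subr_gt0.
Qed.

Lemma norm_invmx_1_subZ_le a c :
  `|invmx (1%:M - s *: N) a c| <= resolvent_bound.
Proof.
case/andP: s01 => s0 s1.
rewrite /invmx unitmx_1_subZ !mxE normrM normfV mulrC /resolvent_bound.
apply: ler_pM; rewrite ?invr_ge0 ?normr_ge0 //.
- apply: norm_cofactor_le => [|p q]; first by rewrite lerDl entry_sum_ge0.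
  rewrite !mxE; apply: le_trans (ler_normB _ _) _; apply: lerD.
    by case: (p == q); rewrite ?normr1 ?normr0.
  rewrite normrM (ger0_norm s0); apply: le_trans (ler_piMl _ s1) _ => //.
  apply: le_trans (_ : `|N p q| <= \sum_c `|N p c|) _.
    by rewrite (bigD1 q) //= lerDl sumr_ge0.
  by rewrite /entry_sum [leRHS](bigD1 p) //= lerDl sumr_ge0 // => ? _; rewrite sumr_ge0.
- rewrite lef_pV2 ?posrE ?normr_gt0 ?exprn_gt0 ?subr_gt0 ?det_1_subZ_ge //.
  by rewrite -unitfE -unitmxE unitmx_1_subZ.
Qed.

End ResolventBound.

Section EntrywiseBounds.
Variable R : realDomainType.

Lemma mulmx_ge0 n m p (P : 'M[R]_(n, m)) (Q : 'M[R]_(m, p)) :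
  (forall a c, 0 <= P a c) -> (forall a c, 0 <= Q a c) ->
  forall a c, 0 <= (P *m Q) a c.
Proof. by move=> P_ge0 Q_ge0 a c; rewrite mxE sumr_ge0 // => k _; rewrite mulr_ge0. Qed.

Lemma exprmx_ge0 n (N : 'M[R]_n) t :
  (forall a c, 0 <= N a c) -> forall a c, 0 <= (N ^+ t) a c.
Proof.
move=> N_ge0; elim: t => [|t IH] a c; first by rewrite expr0 -idmxE mxE ler0n.
by rewrite exprSr -mulmxE; apply: mulmx_ge0.
Qed.

Lemma norm_mulmx_le n m p (P M : 'M[R]_(n, m)) (Q M' : 'M[R]_(m, p)) :
  (forall a c, `|P a c| <= M a c) -> (forall a c, `|Q a c| <= M' a c) ->
  forall a c, `|(P *m Q) a c| <= (M *m M') a c.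
Proof.
move=> PM QM' a c; rewrite !mxE; apply: le_trans (ler_norm_sum _ _ _) _.
by apply: ler_sum => k _; rewrite normrM ler_pM.
Qed.

Lemma norm_exprmx_le n (A M : 'M[R]_n) t :
  (forall a c, `|A a c| <= M a c) -> forall a c, `|(A ^+ t) a c| <= (M ^+ t) a c.
Proof.
move=> AM; elim: t => [|t IH] a c.
  by rewrite expr0 -!idmxE !mxE; case: (a == c); rewrite ?normr1 ?normr0.
by rewrite !exprSr -!mulmxE; apply: norm_mulmx_le.
Qed.

Lemma sum_exprmx_le n (N Z : 'M[R]_n) T :
  (forall a c, 0 <= N a c) -> (forall a c, 0 <= Z a c) -> (1%:M - N) *m Z = 1%:M ->
  forall a c, (\sum_(t < T) N ^+ t) a c <= Z a c.
Proof.
move=> N_ge0 Z_ge0 resZ a c.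
have geom : (\sum_(t < T) N ^+ t) *m (1%:M - N) = 1%:M - N ^+ T.
  elim: T => [|T IH]; first by rewrite big_ord0 mul0mx expr0 idmxE subrr.
  by rewrite big_ord_recr /= mulmxDl IH mulmxBr mulmx1 exprSr mulmxE addrA subrK.
have -> : \sum_(t < T) N ^+ t = Z - N ^+ T *m Z.
  by rewrite -[LHS]mulmx1 -resZ mulmxA geom mulmxBl mul1mx.
have := mulmx_ge0 (exprmx_ge0 T N_ge0) Z_ge0 a c.
by move: (N ^+ T *m Z) => P P_ge0; rewrite !mxE gerBl.
Qed.

Lemma sumr_sqr_ge0 (I : finType) (P : pred I) (x : I -> R) :
  0 <= \sum_(i | P i) x i ^+ 2.
Proof. by rewrite sumr_ge0 // => i _; rewrite sqr_ge0. Qed.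

Lemma sumr_sqr_le (I : finType) (x : I -> R) :
  (forall i, 0 <= x i) -> \sum_i x i ^+ 2 <= (\sum_i x i) ^+ 2.
Proof.
move=> x_ge0; rewrite expr2 mulr_suml; apply: ler_sum => i _.
by rewrite expr2 mulr_sumr (bigD1 i) //= lerDl sumr_ge0 // => k _; rewrite mulr_ge0.
Qed.

Lemma mulmx_trmx_diagE n m k (C : 'M[R]_(n, m)) (B : 'M[R]_(m, k)) p :
  (C *m B *m B^T *m C^T) p p = \sum_r (C *m B) p r ^+ 2.
Proof.
by rewrite -mulmxA -trmx_mul mxE; apply: eq_bigr => r _; rewrite [(_^T) _ _]mxE expr2.
Qed.

End EntrywiseBounds.

(* At a row r minimising Z r c, a negative Z r c would satisfy
   Z r c >= Y r c + (sum_l P r l) Z r c > Z r c. *)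
Lemma substochastic_fixpoint_ge0 (R : realDomainType) n k
    (P : 'M[R]_n) (Y Z : 'M[R]_(n, k)) :
  (forall a c, 0 <= Y a c) -> (forall a c, 0 <= P a c) ->
  (forall a, \sum_c P a c < 1) -> Z = Y + P *m Z -> forall a c, 0 <= Z a c.
Proof.
move=> Y_ge0 P_ge0 P_rows fixZ a c.
have [r _ Zr_min] := @arg_minP _ R _ a xpredT (fun r => Z r c) isT.
rewrite leNgt; apply/negP => Zac_lt0.
have Zr_lt0 : Z r c < 0 := le_lt_trans (Zr_min a isT) Zac_lt0.
have Zr_eq : Z r c = Y r c + \sum_l P r l * Z l c by rewrite {1}fixZ !mxE.
have Zr_le : (\sum_l P r l) * Z r c <= \sum_l P r l * Z l c.
  by rewrite mulr_suml; apply: ler_sum => l _; rewrite ler_wpM2l ?Zr_min.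
have := P_rows r; have := Y_ge0 r c; nra.
Qed.

Lemma invmx_1_subZ_step_ge0 (R : realFieldType) n (N : 'M[R]_n) (s h K : R) :
  (forall a c, 0 <= N a c) -> 0 <= h -> h * K * \sum_a \sum_c N a c < 1 ->
  (1%:M - s *: N) \in unitmx -> (1%:M - (s + h) *: N) \in unitmx ->
  (forall a c, 0 <= invmx (1%:M - s *: N) a c <= K) ->
  forall a c, 0 <= invmx (1%:M - (s + h) *: N) a c.
Proof.
move=> N_ge0 h_ge0 hK_lt1 unit0 unit1 Y0_bound.
set Y0 := invmx (1%:M - s *: N); set Y1 := invmx (1%:M - (s + h) *: N).
have Y1_fix : Y1 = Y0 + (h *: (Y0 *m N)) *m Y1.
  have split0 : 1%:M - s *: N = (1%:M - (s + h) *: N) + h *: N.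
    by rewrite scalerDl opprD addrA subrK.
  rewrite -{1}[Y1]mul1mx -(mulVmx unit0) -/Y0 split0 -mulmxA mulmxDl mulmxV //.
  by rewrite mulmxDr mulmx1 mulmxA scalemxAr.
apply: (substochastic_fixpoint_ge0 _ _ _ Y1_fix) => [a c|a c|a].
- by case/andP: (Y0_bound a c).
- by rewrite mxE mulr_ge0 // mulmx_ge0 // => l c'; case/andP: (Y0_bound l c').
- apply: le_lt_trans hK_lt1.
  under eq_bigr do rewrite !mxE.
  rewrite -mulr_sumr -mulrA ler_wpM2l // exchange_big mulr_sumr ler_sum // => l _.
  rewrite mulr_sumr ler_sum // => c _.
  by rewrite ler_wpM2r ?N_ge0 //; case/andP: (Y0_bound a l).
Qed.

(* Move s from 0 to 1 in L steps of 1/L, where L is so large that the uniform bound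
   resolvent_bound makes every step satisfy invmx_1_subZ_step_ge0. *)
Lemma invmx_1_sub_ge0 (R : realType) n (N : 'M[R]_n) :
  (forall a c, 0 <= N a c) -> specrad N < 1 ->
  (1%:M - N) \in unitmx /\ forall a c, 0 <= invmx (1%:M - N) a c.
Proof.
move=> N_ge0 rho_lt1.
set K := resolvent_bound N; set S := \sum_a \sum_c N a c.
have KS_ge0 : 0 <= K * S.
  by rewrite mulr_ge0 ?resolvent_bound_ge0 ?sumr_ge0 // => a _; rewrite sumr_ge0.
pose L := (Num.Def.archi_bound (K * S)).+1.
have L_gt0 : 0 < L%:R :> R by rewrite ltr0n.
have KS_lt_L : K * S < L%:R.
  by apply: lt_le_trans (archi_boundP KS_ge0) _; rewrite ler_nat.
pose t k : R := k%:R / L%:R.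
have t01 k : (k <= L)%N -> 0 <= t k <= 1.
  move=> kL; rewrite divr_ge0 ?ler0n ?(ltW L_gt0) //=.
  by rewrite ler_pdivrMr // mul1r ler_nat.
have unit_t k : (k <= L)%N -> (1%:M - t k *: N) \in unitmx.
  by move/t01; apply: unitmx_1_subZ.
suff ge0_t k : (k <= L)%N -> forall a c, 0 <= invmx (1%:M - t k *: N) a c.
  have tL : t L = 1 by rewrite /t divff // lt0r_neq0.
  by have := unit_t L (leqnn L); have := ge0_t L (leqnn L); rewrite tL scale1r.
elim: k => [_ a c|k IH kL]; first by rewrite /t mul0r scale0r subr0 invmx1 mxE ler0n.
have kL' := ltnW kL.
have tS : t k.+1 = t k + L%:R^-1 by rewrite /t -addn1 natrD mulrDl mul1r.
rewrite tS; apply: (invmx_1_subZ_step_ge0 (K := K)) (unit_t _ kL') _ _ => //.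
- by rewrite -mulrA mulrC ltr_pdivrMr // mul1r.
- by rewrite -tS unit_t.
- move=> a c; rewrite IH //=.
  exact: le_trans (ler_norm _) (norm_invmx_1_subZ_le rho_lt1 (t01 _ kL') _ _).
Qed.

Lemma absmx_ge0 (R : realType) n m (M : 'M[R]_(n, m)) a c : 0 <= absmx M a c.
Proof. by rewrite mxE. Qed.

Lemma norm_le_absmx (R : realType) n m (M : 'M[R]_(n, m)) a c :
  `|M a c| <= absmx M a c.
Proof. by rewrite mxE. Qed.

Section Gramian.
Variables (R : realType) (n m : nat) (A M Z : 'M[R]_n) (B : 'M[R]_(n, m)).
Hypotheses (AM : forall a c, `|A a c| <= M a c) (M_ge0 : forall a c, 0 <= M a c).
Hypotheses (Z_ge0 : forall a c, 0 <= Z a c) (resZ : (1%:M - M) *m Z = 1%:M).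

Lemma gram_diag_le T p : gram T A B p p <= \sum_r (Z *m absmx B) p r ^+ 2.
Proof.
have MtB_ge0 t a c : 0 <= (M ^+ t *m absmx B) a c.
  by apply: mulmx_ge0 => [? ?|]; [exact: exprmx_ge0 | exact: absmx_ge0].
rewrite /gram summxE; under eq_bigr do rewrite mulmx_trmx_diagE.
rewrite exchange_big /=; apply: ler_sum => r _.
apply: le_trans (_ : \sum_(t < T) (M ^+ t *m absmx B) p r ^+ 2 <= _).
  apply: ler_sum => t _; rewrite -real_normK ?num_real // ler_sqr ?nnegrE //.
  by apply: norm_mulmx_le => [? ?|]; [exact: norm_exprmx_le | exact: norm_le_absmx].
apply: le_trans (sumr_sqr_le (fun t : 'I_T => MtB_ge0 t p r)) _.
rewrite ler_sqr ?nnegrE ?sumr_ge0 ?mulmx_ge0 //; last exact: absmx_ge0.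
rewrite -summxE -mulmx_suml !mxE ler_sum // => k _.
by rewrite ler_wpM2r ?absmx_ge0 ?sum_exprmx_le.
Qed.

Lemma trace_gram_le T : \tr (gram T A B) <= \sum_p \sum_r (Z *m absmx B) p r ^+ 2.
Proof. by apply: ler_sum => p _; apply: gram_diag_le. Qed.

Lemma gram_inf_diagE p : gram_inf A B p p = limn (fun T => gram T A B p p).
Proof.
by rewrite mxE; congr (limn _); apply/funext => T; rewrite /gram summxE big_mkord.
Qed.

Lemma nondecreasing_gram_diag p : nondecreasing_seq (fun T => gram T A B p p).
Proof.
apply/nondecreasing_seqP => T; rewrite /gram !summxE big_ord_recr /= lerDl.
by rewrite mulmx_trmx_diagE sumr_sqr_ge0.
Qed.

Lemma is_cvgn_gram_diag p : cvgn (fun T => gram T A B p p).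
Proof.
apply: nondecreasing_is_cvgn (nondecreasing_gram_diag p) _.
by exists (\sum_r (Z *m absmx B) p r ^+ 2) => _ [T _ <-]; apply: gram_diag_le.
Qed.

Lemma trace_gram_le_gram_inf T : \tr (gram T A B) <= \tr (gram_inf A B).
Proof.
apply: ler_sum => p _; rewrite gram_inf_diagE.
apply: (nondecreasing_cvgn_le (u_ := fun T => gram T A B p p)).
- exact: nondecreasing_gram_diag.
- exact: is_cvgn_gram_diag.
Qed.

Lemma trace_gram_inf_le :
  \tr (gram_inf A B) <= \sum_p \sum_r (Z *m absmx B) p r ^+ 2.
Proof.
apply: ler_sum => p _; rewrite gram_inf_diagE.
apply: limr_le; first exact: is_cvgn_gram_diag.
by apply: nearW => T; apply: gram_diag_le.
Qed.

End Gramian.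

Section RankOneUpdate.
Variable R : pzRingType.

Lemma delta_mx_mulE n k (Q : 'M[R]_(n, k)) (j i p : 'I_n) q :
  (delta_mx j i *m Q) p q = (p == j)%:R * Q i q.
Proof.
rewrite mxE (bigD1 i) //= mxE eqxx andbT big1 ?addr0 // => l li.
by rewrite mxE (negbTE li) andbF mul0r.
Qed.

Lemma mulmx_delta_mxE n k (P : 'M[R]_n) (Q : 'M[R]_(n, k)) (j i p : 'I_n) q :
  (P *m delta_mx j i *m Q) p q = P p j * Q i q.
Proof.
rewrite -mulmxA mxE (bigD1 j) //= delta_mx_mulE eqxx mul1r big1 ?addr0 // => l lj.
by rewrite delta_mx_mulE (negbTE lj) mul0r mulr0.
Qed.

Lemma rank1_update_mulmxE n k (X : 'M[R]_n) (C : 'M[R]_(n, k)) (a : R) (i j p : 'I_n) r :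
  ((X + a *: (X *m delta_mx j i *m X)) *m C) p r =
  (X *m C) p r + a * (X p j * (X *m C) i r).
Proof. by rewrite mulmxDl -scalemxAl mxE [in X in _ + X]mxE -mulmxA mulmx_delta_mxE. Qed.

End RankOneUpdate.

(* Sherman-Morrison. *)
Lemma rank1_update_resolvent (F : fieldType) n (N X : 'M[F]_n) (i j : 'I_n) (c : F) :
  (1%:M - N) *m X = 1%:M -> 1 - c * X i j != 0 ->
  (1%:M - (N + c *: delta_mx j i)) *m
    (X + (c / (1 - c * X i j)) *: (X *m delta_mx j i *m X)) = 1%:M.
Proof.
move=> resX d_neq0; set a := c / _; set Z := X + _.
have a_eq : a - (c + c * a * X i j) = 0 by rewrite /a; field.
have resZ : (1%:M - N) *m Z = 1%:M + a *: (delta_mx j i *m X).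
  by rewrite mulmxDr resX -scalemxAr !mulmxA resX mul1mx.
have deltaZ : (c *: delta_mx j i) *m Z = (c + c * a * X i j) *: (delta_mx j i *m X).
  rewrite -scalemxAl; apply/matrixP => p q.
  rewrite [LHS]mxE delta_mx_mulE [RHS]mxE delta_mx_mulE /Z mxE [in X in _ + X]mxE.
  by rewrite mulmx_delta_mxE; ring.
by rewrite opprD addrA mulmxBl resZ deltaZ -addrA -scalerBl a_eq scale0r addr0.
Qed.

(* Entry (i, j) of Y = X + c X e_j e_i^T Y reads Y i j (1 - c X i j) = X i j. *)
Lemma rank1_update_denom_gt0 (R : realFieldType) n (N X Y : 'M[R]_n) (i j : 'I_n)
    (c : R) :
  0 <= c -> (forall a b, 0 <= X a b) -> (forall a b, 0 <= Y a b) ->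
  X *m (1%:M - N) = 1%:M -> (1%:M - (N + c *: delta_mx j i)) *m Y = 1%:M ->
  0 < 1 - c * X i j.
Proof.
move=> c_ge0 X_ge0 Y_ge0 X_linv resY.
have Y_eq : Y = X + c *: (X *m delta_mx j i *m Y).
  have resY' : (1%:M - N) *m Y = 1%:M + c *: (delta_mx j i *m Y).
    by rewrite -[in RHS]resY scalemxAl -mulmxDl opprD addrA subrK.
  by rewrite -[LHS]mul1mx -X_linv -mulmxA resY' mulmxDr mulmx1 -scalemxAr mulmxA.
have Yij : Y i j * (1 - c * X i j) = X i j.
  move/matrixP/(_ i j): Y_eq; rewrite mxE [in X in _ + X]mxE mulmx_delta_mxE => Y_ij.
  by rewrite mulrBr mulr1 {1}Y_ij; ring.
rewrite ltNge; apply/negP => d_le0.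
have X0 : X i j = 0.
  by apply/le_anti; rewrite X_ge0 andbT -Yij mulr_ge0_le0.
by move: d_le0; rewrite X0 mulr0 subr0 ler10.
Qed.

Section CrossTerm.
Variables (R : rcfType) (n m : nat) (Y : 'M[R]_(n, m)) (c : 'I_n -> R) (i : 'I_n).

Lemma mul2_dot_le (K : R) p :
  K * (2 * (c p * \sum_r Y p r * Y i r)) <=
  c p ^+ 2 * \sum_r Y i r ^+ 2 + K ^+ 2 * \sum_r Y p r ^+ 2.
Proof.
rewrite -subr_ge0.
have -> : c p ^+ 2 * \sum_r Y i r ^+ 2 + K ^+ 2 * \sum_r Y p r ^+ 2
          - K * (2 * (c p * \sum_r Y p r * Y i r))
        = \sum_r (c p * Y i r - K * Y p r) ^+ 2.
  rewrite !mulr_sumr -big_split -sumrB /=; apply: eq_bigr => r _; ring.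
exact: sumr_sqr_ge0.
Qed.

(* mul2_dot_le with weight K = c i + rho, rho = sqrt (sum_p c p ^+ 2); the terms p != i
   then add up because sum_(p != i) c p ^+ 2 = (rho - c i) K. *)
Lemma cross_term_le : 0 <= c i ->
  2 * \sum_p c p * \sum_r Y p r * Y i r <=
  (c i + Num.sqrt (\sum_p c p ^+ 2)) * \sum_p \sum_r Y p r ^+ 2.
Proof.
move=> ci_ge0.
have rho2 : Num.sqrt (\sum_p c p ^+ 2) ^+ 2 = c i ^+ 2 + \sum_(p | p != i) c p ^+ 2.
  by rewrite sqr_sqrtr ?sumr_sqr_ge0 // (bigD1 i).
have rho_ge0 := sqrtr_ge0 (\sum_p c p ^+ 2).
move: rho2 rho_ge0; set rho := Num.sqrt _; set Q := \sum_(p | p != i) _ => rho2 rho_ge0.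
rewrite (bigD1 i) //= [X in _ <= _ * X](bigD1 i) //=.
under [X in c i * X]eq_bigr do rewrite -expr2.
set a := \sum_r Y i r ^+ 2.
set S := \sum_(p | p != i) \sum_r _; set D := \sum_(p | p != i) c p * _.
have [K0 | K_gt0] := eqVneq (c i + rho) 0.
  have [ci0 rho0] : c i = 0 /\ rho = 0.
    by move/eqP: K0; rewrite paddr_eq0 // => /andP[/eqP -> /eqP ->].
  have Q0 : Q = 0 by move: rho2; rewrite rho0 ci0 !expr0n /= add0r.
  have c0 p : p != i -> c p = 0.
    move=> pi; apply/eqP; rewrite -sqrf_eq0; apply/eqP.
    exact: (psumr_eq0P (fun q _ => sqr_ge0 (c q)) Q0).
  rewrite /D big1 => [|p /c0 ->]; last exact: mul0r.
  by rewrite K0 ci0 !mul0r addr0 mulr0.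
have K_pos : 0 < c i + rho by rewrite lt_def K_gt0 addr_ge0.
have D_le : (c i + rho) * (2 * D) <= Q * a + (c i + rho) ^+ 2 * S.
  rewrite /D /S /Q [2 * _]mulr_sumr [(c i + rho) * _]mulr_sumr [_ * a]mulr_suml.
  rewrite [_ ^+ 2 * _]mulr_sumr -big_split /= ler_sum // => p _.
  exact: mul2_dot_le.
have Q_eq : Q = rho ^+ 2 - c i ^+ 2 by rewrite rho2 addrC addKr.
rewrite -(ler_pM2l K_pos).
have -> : (c i + rho) * (2 * (c i * a + D)) =
    2 * (c i + rho) * c i * a + (c i + rho) * (2 * D) by ring.
have -> : (c i + rho) * ((c i + rho) * (a + S)) =
    2 * (c i + rho) * c i * a + (Q * a + (c i + rho) ^+ 2 * S) by rewrite Q_eq; ring.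
by rewrite lerD2l.
Qed.

End CrossTerm.

Lemma sumsqr_rank1_update_le (R : rcfType) n m (Y : 'M[R]_(n, m)) (c : 'I_n -> R)
    (i : 'I_n) (a : R) :
  0 <= a -> 0 <= c i ->
  \sum_p \sum_r (Y p r + a * (c p * Y i r)) ^+ 2 <=
  (1 + a * (c i + Num.sqrt (\sum_p c p ^+ 2))) * \sum_p \sum_r Y p r ^+ 2
  + a ^+ 2 * ((\sum_p c p ^+ 2) * \sum_r Y i r ^+ 2).
Proof.
move=> a_ge0 ci_ge0.
have -> : \sum_p \sum_r (Y p r + a * (c p * Y i r)) ^+ 2 =
    \sum_p \sum_r Y p r ^+ 2 + a * (2 * \sum_p c p * \sum_r Y p r * Y i r)
    + a ^+ 2 * ((\sum_p c p ^+ 2) * \sum_r Y i r ^+ 2).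
  rewrite [2 * _]mulr_sumr [a * _]mulr_sumr [_ * \sum_r _]mulr_suml.
  rewrite [a ^+ 2 * _]mulr_sumr -!big_split /=; apply: eq_bigr => p _.
  by rewrite !mulr_sumr -!big_split /=; apply: eq_bigr => r _; ring.
by rewrite lerD2r [in leRHS]mulrDl mul1r lerD2l -mulrA ler_wpM2l // cross_term_le.
Qed.

Lemma le_max_offdiag (R : realType) n (i j : 'I_n) (F : 'I_n -> 'I_n -> R) p q :
  p != q -> F p q <= max_offdiag i j F.
Proof.
move=> pq; apply: le_trans (le_bigmax _ _ p).
exact: (le_bigmax_cond (F i j) (P := fun q' => p != q') (F p)).
Qed.

Lemma le_max_all (R : realType) n (i : 'I_n) (F : 'I_n -> R) k :
  F k <= max_all i F.
Proof. exact: le_bigmax. Qed.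

Section RankOnePerturbation.
Variables (R : realType) (n m : nat) (A : 'M[R]_n) (B : 'M[R]_(n, m)).
Variables (i j : 'I_n) (w : R).
Hypothesis rhoA : specrad (absmx A) < 1.
Hypothesis rhoM : specrad (absmx A + `|w| *: delta_mx j i) < 1.

Let X := invmx (1%:M - absmx A).
Let M := absmx A + `|w| *: delta_mx j i.

Let unit_X_ge0 : (1%:M - absmx A) \in unitmx /\ forall a c, 0 <= X a c.
Proof. by apply: invmx_1_sub_ge0 => // a c; apply: absmx_ge0. Qed.

Let M_ge0 a c : 0 <= M a c.
Proof. by rewrite !mxE addr_ge0 ?mulr_ge0 ?ler0n. Qed.

Lemma rank1_denom_gt0 : 0 < 1 - `|w| * X i j.
Proof.
have [uX X_ge0] := unit_X_ge0; have [uM XM_ge0] := invmx_1_sub_ge0 M_ge0 rhoM.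
exact: rank1_update_denom_gt0 (normr_ge0 w) X_ge0 XM_ge0 (mulVmx uX) (mulmxV uM).
Qed.

Let a := `|w| / (1 - `|w| * X i j).
Let H := X *m absmx B *m (absmx B)^T *m X^T.

Lemma trace_gram_rank1_le T :
  \tr (gram T (A + w *: delta_mx j i) B) <=
  (1 + a * (X i j + Num.sqrt (\sum_k X k j ^+ 2)))
    * \sum_p \sum_r (X *m absmx B) p r ^+ 2
  + a ^+ 2 * ((\sum_k X k j ^+ 2) * \sum_r (X *m absmx B) i r ^+ 2).
Proof.
have [uX X_ge0] := unit_X_ge0; have [uM _] := invmx_1_sub_ge0 M_ge0 rhoM.
have a_ge0 : 0 <= a by rewrite divr_ge0 // ltW // rank1_denom_gt0.
have AM p q : `|(A + w *: delta_mx j i) p q| <= M p q.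
  by rewrite !mxE (le_trans (ler_normD _ _)) // lerD2l normrM normr_nat.
have resZ := rank1_update_resolvent (mulmxV uX) (lt0r_neq0 rank1_denom_gt0).
have Z_ge0 p q : 0 <= (X + a *: (X *m delta_mx j i *m X)) p q.
  rewrite mxE [in X in _ + X]mxE mulmx_delta_mxE.
  exact: addr_ge0 (X_ge0 p q) (mulr_ge0 a_ge0 (mulr_ge0 (X_ge0 p j) (X_ge0 i q))).
apply: le_trans (trace_gram_le B AM M_ge0 Z_ge0 resZ T) _.
under eq_bigr do under eq_bigr do rewrite rank1_update_mulmxE.
exact: (sumsqr_rank1_update_le _ (c := fun p => X p j) a_ge0 (X_ge0 i j)).
Qed.

Lemma trace_gram_rank1_le_bound T (alpha beta gamma gammabar : R) :
  a <= alpha -> X i j + Num.sqrt (\sum_k X k j ^+ 2) <= beta ->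
  (X^T *m X) j j <= gamma -> H i i <= gammabar ->
  \tr (gram T (A + w *: delta_mx j i) B)
    <= (1 + alpha * beta) * \tr H + alpha ^+ 2 * gamma * gammabar.
Proof.
have [_ X_ge0] := unit_X_ge0.
have a_ge0 : 0 <= a by rewrite divr_ge0 // ltW // rank1_denom_gt0.
have trH : \tr H = \sum_p \sum_r (X *m absmx B) p r ^+ 2.
  by apply: eq_bigr => p _; rewrite mulmx_trmx_diagE.
have XtX_jj : (X^T *m X) j j = \sum_k X k j ^+ 2.
  by rewrite mxE; apply: eq_bigr => k _; rewrite mxE expr2.
rewrite /H mulmx_trmx_diagE -/H XtX_jj => a_le b_le g_le gb_le.
apply: le_trans (trace_gram_rank1_le T) _; rewrite -trH -mulrA.
rewrite lerD // ?ler_wpM2r // ?lerD2l ?ler_pM ?addr_ge0 ?sqrtr_ge0 ?X_ge0 //.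
- by rewrite trH sumr_ge0 // => p _; apply: sumr_sqr_ge0.
- exact: exprn_ge0.
- exact: mulr_ge0 (sumr_sqr_ge0 _ _) (sumr_sqr_ge0 _ _).
- exact: sumr_sqr_ge0.
- exact: sumr_sqr_ge0.
Qed.

End RankOnePerturbation.

Theorem theorem5p1 (R : realType) (n m T : nat)
  (A : 'M[R]_n) (B : 'M[R]_(n, m)) (i j : 'I_n) (w : R) :
  specrad (absmx A) < 1 ->
  (0 < T)%N ->
  i != j ->
  specrad (absmx A + `|w| *: delta_mx j i) < 1 ->
  let X := invmx (1%:M - absmx A) in
  let H := X *m absmx B *m (absmx B)^T *m X^T in
  let alpha := max_offdiag i j (fun p q => `|w| / (1 - `|w| * X p q)) in
  let beta := Num.max
      (max_offdiag i j (fun p q => 2 * X p q))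
      (max_offdiag i j (fun p q => X p q)
         + max_all i (fun q => Num.sqrt (\sum_(k < n) X k q ^+ 2))) in
  let gamma := max_all i (fun k => (X^T *m X) k k) in
  let gammabar := max_all i (fun k => H k k) in
  [/\ \tr (gram T A B) <= \tr (gram_inf A B),
      \tr (gram_inf A B) <= \tr H
    & \tr (gram T (A + w *: delta_mx j i) B)
        <= (1 + alpha * beta) * \tr H + alpha ^+ 2 * gamma * gammabar].
Proof.
move=> rhoA _ ij rhoM X H alpha beta gamma gammabar.
have absA_ge0 := @absmx_ge0 R n n A.
have [uX X_ge0] : (1%:M - absmx A) \in unitmx /\ forall a c, 0 <= X a c.
  exact: invmx_1_sub_ge0.
have resX : (1%:M - absmx A) *m X = 1%:M by apply: mulmxV.
split; first exact: trace_gram_le_gram_inf B (norm_le_absmx A) absA_ge0 X_ge0 resX T.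
  rewrite [leRHS](eq_bigr _ (fun p _ => mulmx_trmx_diagE _ _ p)).
  exact: trace_gram_inf_le B (norm_le_absmx A) absA_ge0 X_ge0 resX.
apply: trace_gram_rank1_le_bound => //.
- exact: (le_max_offdiag i j (fun p q => `|w| / (1 - `|w| * X p q)) ij).
- rewrite le_max; apply/orP; right; apply: lerD.
    exact: (le_max_offdiag i j (fun p q => X p q) ij).
  exact: (le_max_all i (fun q => Num.sqrt (\sum_(k < n) X k q ^+ 2)) j).
- exact: (le_max_all i (fun k => (X^T *m X) k k) j).
- exact: (le_max_all i (fun k => H k k) i).
Qed.
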